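(* Let $\mathbb{K}$ be an algebraically closed field of characteristic zero, $\mathcal{C}\subset\mathbb{K}^2$ an affine irreducible plane curve defined by an irreducible polynomial $f$, $A=(a,b)\in\mathbb{K}^2$, $d\in\mathbb{K}\setminus\{0\}$, and assume $\mathcal{C}_0\neq\emptyset$. Then: (1) if $\Omega$ is a non-empty open subset of $\mathcal{C}$, then $\pi_1(\pi_2^{-1}(\Omega))$ is a non-empty Zariski dense subset of $\mathfrak{C}(\mathcal{C},A,d)$; (2) if $\mathcal{C}$ is not the circle centered at $A$ of radius $d$, and $\Omega$ is a non-empty open subset of an irreducible component of $\mathfrak{C}(\mathcal{C},A,d)$, then $\pi_2(\pi_1^{-1}(\Omega))$ is a non-empty Zariski dense subset of $\mathcal{C}$.
   Context: $\mathfrak{B}(\mathcal{C},A,d)\subset\mathbb{K}^2\times\mathbb{K}^2\times\mathbb{K}$ is the algebraic set of $(\bar x,\bar y,w)$ with $f(y_1,y_2)=0$, $(x_1-y_1)^2+(x_2-y_2)^2=d^2$, $(y_2-b)(x_1-y_1)-(y_1-a)(x_2-y_2)=0$, $w((y_1-a)^2+(y_2-b)^2)=1$; $\pi_1,\pi_2$ are the projections $(\bar x,\bar y,w)\mapsto\bar x$ and $\mapsto\bar y$ restricted to $\mathfrak{B}(\mathcal{C},A,d)$. The conchoid $\mathfrak{C}(\mathcal{C},A,d)$ is the Zariski closure of $\pi_1(\mathfrak{B}(\mathcal{C},A,d))$. $\mathcal{C}_0=\{(p_1,p_2)\in\mathcal{C}:(p_1-a)^2+(p_2-b)^2\neq0\}$.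 The circle centered at $A$ of radius $d$ is $(y_1-a)^2+(y_2-b)^2=d^2$. *)

From HB Require Import structures.
From mathcomp Require Import all_boot all_order all_algebra.
Set Implicit Arguments. Unset Strict Implicit. Unset Printing Implicit Defensive.
Import GRing.Theory.
Local Open Scope ring_scope.

Section Conchoid.
Variable K : fieldType.

(* Bivariate polynomials K[y1,y2] are {poly {poly K}}: inner variable = first
   coordinate, outer variable = second coordinate. *)
Definition ev2 (p : {poly {poly K}}) (x : K * K) : K := (p.[x.2%:P]).[x.1].

Definition irreducible_elt (R : comUnitRingType) (p : R) : Prop :=
  p != 0 /\ p \isn't a GRing.unit /\
  forall g h : R, p = g * h -> g \is a GRing.unit \/ h \is a GRing.unit.

Definition subset2 (S T : K * K -> Prop) := forall x, S x -> T x.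

Definition zariski_closed (S : K * K -> Prop) : Prop :=
  exists F : {poly {poly K}} -> Prop,
    forall x, S x <-> (forall g, F g -> ev2 g x = 0).

Definition zclosure (S : K * K -> Prop) : K * K -> Prop :=
  fun x => forall Z, zariski_closed Z -> subset2 S Z -> Z x.

Definition zirreducible (Z : K * K -> Prop) : Prop :=
  zariski_closed Z /\ (exists x, Z x) /\
  forall Z1 Z2, zariski_closed Z1 -> zariski_closed Z2 ->
    (forall x, Z x <-> Z1 x \/ Z2 x) -> subset2 Z Z1 \/ subset2 Z Z2.

Definition irreducible_component (Y Z : K * K -> Prop) : Prop :=
  zirreducible Z /\ subset2 Z Y /\
  forall Z', zirreducible Z' -> subset2 Z Z' -> subset2 Z' Y -> subset2 Z' Z.

Definition open_in (X O : K * K -> Prop) : Prop :=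
  exists Z, zariski_closed Z /\ forall x, O x <-> X x /\ ~ Z x.

Definition curve (f : {poly {poly K}}) : K * K -> Prop := fun y => ev2 f y = 0.

Definition conchB (f : {poly {poly K}}) (a b d : K) (x y : K * K) (w : K) : Prop :=
  ev2 f y = 0 /\
  (x.1 - y.1) ^+ 2 + (x.2 - y.2) ^+ 2 = d ^+ 2 /\
  (y.2 - b) * (x.1 - y.1) - (y.1 - a) * (x.2 - y.2) = 0 /\
  w * ((y.1 - a) ^+ 2 + (y.2 - b) ^+ 2) = 1.

Definition pi1_pi2inv f a b d (O : K * K -> Prop) : K * K -> Prop :=
  fun x => exists y w, conchB f a b d x y w /\ O y.
Definition pi2_pi1inv f a b d (O : K * K -> Prop) : K * K -> Prop :=
  fun y => exists x w, conchB f a b d x y w /\ O x.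

Definition conchoid f a b d : K * K -> Prop :=
  zclosure (pi1_pi2inv f a b d (fun _ => True)).

Definition circle (a b d : K) : K * K -> Prop :=
  fun y => (y.1 - a) ^+ 2 + (y.2 - b) ^+ 2 = d ^+ 2.

Definition nonempty_dense_subset (S T : K * K -> Prop) : Prop :=
  (exists x, S x) /\ subset2 S T /\ subset2 T (zclosure S).

End Conchoid.

From HB Require Import structures.
From mathcomp Require Import all_boot all_order all_algebra.
From Stdlib Require Import Classical.
From mathcomp Require Import ring zify.
Set Implicit Arguments. Unset Strict Implicit. Unset Printing Implicit Defensive.
Import GRing.Theory.
Local Open Scope ring_scope.

(* Away from its finitely many points on the isotropic lines through A, the curve C is
   covered twice by the incidence variety B: over y lie the square roots s of
   |y - A|^2, and pi_1 maps (y, s) to y + (d / s) (y - A).  A polynomial composed with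
   this map has the form phi0 y + s phi1 y with phi0, phi1 regular on C; replacing s by
   -s (characteristic 0) and using the irreducibility of f, if it vanishes over all
   but finitely many points of C it vanishes over all of C.  This gives (1).
   For (2), the plane being noetherian, a component G of the conchoid is not contained
   in a closed set Y containing the rest of the conchoid, so a non-empty open subset of
   an infinite G contains infinitely many points of pi_1(B); their preimages form an
   infinite, hence dense, subset of C.  A point component is impossible: the fibre of
   pi_1 over it is finite (here C is not the circle of radius d about A), and the
   vanishing principle above shows that it lies in the closure of the rest. *)

Lemma size1_polyC_neq0 (R : nzRingType) (c : {poly R}) : size c = 1%N ->
  exists2 k : R, k != 0 & c = k%:P.
Proof.
move=> c1; have cE := size1_polyC (eq_leq c1); exists c`_0 => //.
by apply: contra_eqN c1 => /eqP c00; rewrite cE c00 size_poly0.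
Qed.

Section BivariateEvaluation.
Variable K : fieldType.
Implicit Types (p q g h : {poly {poly K}}) (x : K * K).

Definition peval1 (z : K) p : {poly K} := map_poly (horner_eval z) p.

Lemma ev2_peval1 p x : ev2 p x = (peval1 x.1 p).[x.2].
Proof.
rewrite /ev2 /peval1 -[x.2 in RHS](hornerC x.2 x.1) -horner_evalE horner_map.
by rewrite horner_evalE.
Qed.

Lemma ev2M p q x : ev2 (p * q) x = ev2 p x * ev2 q x.
Proof. by rewrite /ev2 !hornerM. Qed.
Lemma ev2D p q x : ev2 (p + q) x = ev2 p x + ev2 q x.
Proof. by rewrite /ev2 !hornerD. Qed.
Lemma ev2B p q x : ev2 (p - q) x = ev2 p x - ev2 q x.
Proof. by rewrite /ev2 !hornerD !hornerN. Qed.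
Lemma ev2_exp p n x : ev2 (p ^+ n) x = ev2 p x ^+ n.
Proof. by rewrite /ev2 !horner_exp. Qed.
Lemma ev2C (c : {poly K}) x : ev2 c%:P x = c.[x.1].
Proof. by rewrite /ev2 hornerC. Qed.
Lemma ev2CC (c : K) x : ev2 c%:P%:P x = c.
Proof. by rewrite ev2C hornerC. Qed.
Lemma ev2X x : ev2 'X x = x.2.
Proof. by rewrite /ev2 hornerX hornerC. Qed.
Lemma ev2XC x : ev2 ('X : {poly K})%:P x = x.1.
Proof. by rewrite ev2C hornerX. Qed.
Lemma ev2_0 x : ev2 0 x = 0.
Proof. by rewrite -polyC0 -polyC0 ev2CC. Qed.
Lemma ev2_1 x : ev2 1 x = 1.
Proof. by rewrite -polyC1 -polyC1 ev2CC. Qed.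

Lemma peval1M z p q : peval1 z (p * q) = peval1 z p * peval1 z q.
Proof. exact: rmorphM. Qed.

Lemma peval1_XsubC z : peval1 z ('X - z%:P)%:P = 0.
Proof. by rewrite /peval1 map_polyC /= horner_evalE hornerXsubC subrr. Qed.

Lemma XsubC_polyC_neq0 (z : K) : (('X - z%:P)%:P : {poly {poly K}}) != 0.
Proof. by rewrite polyC_eq0 polyXsubC_eq0. Qed.

Lemma XsubC_polyC_nonunit (z : K) : (('X - z%:P)%:P : {poly {poly K}}) \isn't a GRing.unit.
Proof. by rewrite poly_unitE size_polyC polyXsubC_eq0 coefC /= poly_unitE size_XsubC. Qed.

(* Coefficientwise division: [peval1 z p = 0] means [X1 - z] divides every coefficient. *)
Lemma peval1_eq0_factor z p : peval1 z p = 0 ->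
  p = ('X - z%:P)%:P * map_poly (fun c => c %/ ('X - z%:P)) p.
Proof.
move=> pz0; apply/polyP => i.
rewrite coefCM coef_map_id0 ?div0p // mulrC Pdiv.Field.divpK // dvdp_XsubCl /root.
have : (peval1 z p)`_i = 0 by rewrite pz0 coef0.
by rewrite /peval1 coef_map_id0 ?horner_evalE ?horner0 // => ->.
Qed.

Lemma ev2_unit_neq0 p x : p \is a GRing.unit -> ev2 p x != 0.
Proof.
move=> pu; apply/eqP => px0.
by have /eqP := ev2M p p^-1 x; rewrite mulrV // ev2_1 px0 mul0r oner_eq0.
Qed.

Lemma unit_size1 p : p \is a GRing.unit -> size p = 1%N.
Proof. by rewrite poly_unitE => /andP [/eqP]. Qed.

Lemma peval1_irreducible_neq0 q z : irreducible_elt q -> (1 < size q)%N -> peval1 z q != 0.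
Proof.
move=> [_ [_ q_irr]] q_gt1; apply/negP => /eqP/peval1_eq0_factor qE.
case: (q_irr _ _ qE) => [|/unit_size1]; first by rewrite (negPf (XsubC_polyC_nonunit z)).
by rewrite -(size_Cmul _ (negbT (polyXsubC_eq0 z))) -qE => q1; rewrite q1 in q_gt1.
Qed.

Lemma ev2_neq0_poly g x : ev2 g x != 0 -> g != 0.
Proof. by apply: contraNneq => ->; rewrite ev2_0. Qed.

End BivariateEvaluation.

Lemma ev2_closed_class (K : fieldType) (X : Type) (P : (X -> K) -> Prop) :
  (forall u v, P u -> (forall t, u t = v t) -> P v) ->
  (forall c : K, P (fun _ => c)) ->
  (forall u v, P u -> P v -> P (fun t => u t + v t)) ->
  (forall u v, P u -> P v -> P (fun t => u t * v t)) ->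
  forall g u1 u2, P u1 -> P u2 -> P (fun t => ev2 g (u1 t, u2 t)).
Proof.
move=> P_ext P_cst PD PM g u1 u2 Pu1 Pu2.
have P_horner (c : {poly K}) : P (fun t => c.[u1 t]).
  elim/poly_ind: c => [|c k IH]; first by apply: P_ext (P_cst 0) _ => t; rewrite horner0.
  by apply: P_ext (PD _ _ (PM _ _ IH Pu1) (P_cst k)) _ => t; rewrite hornerMXaddC.
elim/poly_ind: g => [|g c IH]; first by apply: P_ext (P_cst 0) _ => t; rewrite ev2_0.
apply: P_ext (PD _ _ (PM _ _ IH Pu2) (P_horner c)) _ => t.
by rewrite ev2D ev2M ev2X ev2C.
Qed.

Section ClosedFieldCurves.
Variable K : closedFieldType.
Implicit Types (p q g h : {poly {poly K}}) (x : K * K).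

Lemma poly_factor_root (c : {poly K}) : c != 0 -> size c != 1%N ->
  exists z c', [/\ c = c' * ('X - z%:P), c' != 0 & (size c' < size c)%N].
Proof.
move=> c0 /closed_rootP [z /factor_theorem [c' cE]].
have c'0 : c' != 0 by apply: contraNneq c0 => c'0; rewrite cE c'0 mul0r.
exists z, c'; split=> //.
by rewrite cE size_mul ?polyXsubC_eq0 // size_XsubC addn2.
Qed.

(* Gauss-type lemmas: peel the linear factors [X1 - z] off a constant in the first variable. *)
Lemma irreducible_dvd_polyC_mul q (beta : {poly K}) G H :
  irreducible_elt q -> (1 < size q)%N -> beta != 0 ->
  beta%:P * G = H * q -> exists H', G = H' * q.
Proof.
move=> q_irr q_gt1; elim: {beta}_.+1 {-2}beta (ltnSn (size beta)) G H => // n IH beta.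
rewrite ltnS => beta_le G H beta0 E.
case: (eqVneq (size beta) 1%N) => [beta1|beta_n1].
  have [k k0 betaE] := size1_polyC_neq0 beta1.
  exists (k^-1%:P%:P * H).
  by rewrite -mulrA -E betaE mulrA -!polyCM mulVf // !polyC1 mul1r.
have [z [c' [cE c'0 c'_lt]]] := poly_factor_root beta0 beta_n1.
have {}E : ('X - z%:P)%:P * (c'%:P * G) = H * q by rewrite -E cE polyCM; ring.
have /eqP : peval1 z H * peval1 z q = 0 by rewrite -peval1M -E peval1M peval1_XsubC mul0r.
rewrite mulf_eq0 (negPf (peval1_irreducible_neq0 z q_irr q_gt1)) orbF.
move=> /eqP/peval1_eq0_factor HE; move: E; rewrite HE -mulrA.
move=> /(mulfI (XsubC_polyC_neq0 z)); apply: IH c'0.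
exact: leq_trans c'_lt beta_le.
Qed.

Lemma irreducible_factor_size1 q (lam : {poly K}) Q h :
  irreducible_elt q -> lam != 0 -> (1 < size h)%N ->
  lam%:P * q = Q * h -> size Q = 1%N.
Proof.
move=> q_irr; elim: {lam}_.+1 {-2}lam (ltnSn (size lam)) Q h => // n IH lam.
rewrite ltnS => lam_le Q h lam0 h_gt1 E.
case: (eqVneq (size lam) 1%N) => [lam1|lam_n1].
  have [k k0 lamE] := size1_polyC_neq0 lam1.
  have qE : q = (k^-1%:P%:P * Q) * h.
    by rewrite -mulrA -E mulrA lamE -!polyCM mulVf // !polyC1 mul1r.
  case: q_irr => _ [_ /(_ _ _ qE) [/unit_size1|/unit_size1 h1]].
    by rewrite size_Cmul // !polyC_eq0 invr_eq0.
  by rewrite h1 in h_gt1.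
have [z [c' [cE c'0 c'_lt]]] := poly_factor_root lam0 lam_n1.
have c'_le : (size c' < n)%N := leq_trans c'_lt lam_le.
have {}E : ('X - z%:P)%:P * (c'%:P * q) = Q * h by rewrite -E cE polyCM; ring.
have /eqP : peval1 z Q * peval1 z h = 0 by rewrite -peval1M -E peval1M peval1_XsubC mul0r.
rewrite mulf_eq0 => /orP [/eqP/peval1_eq0_factor QE|/eqP/peval1_eq0_factor hE].
  move: E; rewrite QE -mulrA => /(mulfI (XsubC_polyC_neq0 z)) E.
  by rewrite size_Cmul ?polyXsubC_eq0 // (IH c' c'_le _ h c'0 h_gt1 E).
move: E; rewrite hE [Q * _]mulrCA => /(mulfI (XsubC_polyC_neq0 z)) E.
apply: (IH c' c'_le _ _ c'0 _ E).
by move: h_gt1; rewrite {1}hE size_Cmul ?polyXsubC_eq0.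
Qed.

Lemma poly_roots_in_seq (p : {poly K}) : p != 0 ->
  exists rs : seq K, forall t, p.[t] = 0 -> t \in rs.
Proof.
move=> p0; have [rs pE] := closed_field_poly_normal p.
exists rs => t; rewrite pE hornerZ horner_prod => /eqP.
rewrite mulf_eq0 lead_coef_eq0 (negPf p0) prodf_seq_eq0 => /hasP [z zs].
by rewrite hornerXsubC subr_eq0 => /eqP ->.
Qed.

(* An algebraically closed field is infinite: [prod (X - z) - 1] has a root. *)
Lemma exists_notin (s : seq K) : exists t : K, t \notin s.
Proof.
case: s => [|z0 s]; first by exists 0.
pose P := \prod_(z <- z0 :: s) ('X - z%:P) - 1.
have P_n1 : size P != 1%N.
  by rewrite /P size_polyDl ?size_prod_XsubC ?size_polyN ?size_poly1.
have [t /rootP/eqP] := closed_rootP P P_n1.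
rewrite hornerD hornerN hornerC horner_prod => Pt.
exists t; apply: contraL Pt => ts.
suff /eqP -> : \prod_(z <- z0 :: s) ('X - z%:P).[t] == 0 by rewrite sub0r oppr_eq0 oner_eq0.
by rewrite prodf_seq_eq0; apply/hasP; exists t => //; rewrite hornerXsubC subrr eqxx.
Qed.

Lemma exists_nonroot_notin (p : {poly K}) (s : seq K) : p != 0 ->
  exists t, p.[t] != 0 /\ t \notin s.
Proof.
move=> p0; have [rs rsP] := poly_roots_in_seq p0.
have [t] := exists_notin (rs ++ s); rewrite mem_cat negb_or => /andP [t_rs t_s].
by exists t; split=> //; apply: contra t_rs => /eqP/rsP.
Qed.

Lemma exists_sqrt (c : K) : exists s : K, s ^+ 2 = c.
Proof.
have X2c_n1 : size ('X^2 - c%:P) != 1%N by rewrite size_XnsubC.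
have [t /rootP] := closed_rootP _ X2c_n1.
by rewrite hornerD hornerN hornerC hornerXn => /eqP; rewrite subr_eq0 => /eqP; exists t.
Qed.

Definition in_ideal2 q g h := exists u v, h = u * q + v * g.

(* Euclid's algorithm in [X2]: an element of the ideal of least positive degree in [X2]
   would divide [q] up to a constant, hence be associate to [q], and then [q] would
   divide [g], which is impossible as [g x0 != 0 = q x0]. *)
Lemma ideal_has_polyC q g x0 : irreducible_elt q -> (1 < size q)%N ->
  ev2 q x0 = 0 -> ev2 g x0 != 0 -> exists2 r : {poly K}, r != 0 & in_ideal2 q g r%:P.
Proof.
move=> q_irr q_gt1 qx0 gx0.
suff: forall n h, (size h < n)%N -> h != 0 -> in_ideal2 q g h ->
    exists2 r : {poly K}, r != 0 & in_ideal2 q g r%:P.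
  move=> /(_ (size q).+1 q (ltnSn _)); apply; first by case: q_irr.
  by exists 1, 0; rewrite mul1r mul0r addr0.
elim=> // n IH h; rewrite ltnS => h_le h0 [u [v huv]].
case: (leqP (size h) 1) => [h_le1|h_gt1].
  exists h`_0; last by rewrite -size1_polyC //; exists u, v.
  by apply: contraNneq h0 => h00; rewrite (size1_polyC h_le1) h00.
have lh0 : lead_coef h != 0 by rewrite lead_coef_eq0.
set l1 := lead_coef h ^+ scalp q h; set l2 := lead_coef h ^+ scalp g h.
have l10 : l1 != 0 by rewrite expf_neq0.
have l20 : l2 != 0 by rewrite expf_neq0.
have E1 : l1%:P * q = q %/ h * h + q %% h by rewrite mul_polyC Pdiv.Idomain.divp_eq.
have E2 : l2%:P * g = g %/ h * h + g %% h by rewrite mul_polyC Pdiv.Idomain.divp_eq.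
case: (eqVneq (q %% h) 0) => [r1|r1]; last first.
  apply: (IH (q %% h)) => //; first exact: leq_trans (ltn_modpN0 q h0) h_le.
  exists (l1%:P - q %/ h * u), (- (q %/ h * v)).
  have -> : q %% h = l1%:P * q - q %/ h * h by rewrite E1; ring.
  by rewrite huv; ring.
case: (eqVneq (g %% h) 0) => [r2|r2]; last first.
  apply: (IH (g %% h)) => //; first exact: leq_trans (ltn_modpN0 g h0) h_le.
  exists (- (g %/ h * u)), (l2%:P - g %/ h * v).
  have -> : g %% h = l2%:P * g - g %/ h * h by rewrite E2; ring.
  by rewrite huv; ring.
rewrite r1 addr0 in E1; rewrite r2 addr0 in E2.
have q_h := irreducible_factor_size1 q_irr l10 h_gt1 E1.
have [mu mu0 muE] : exists2 mu, mu != 0 & q %/ h = mu%:P.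
  exact: size1_polyC_neq0 q_h.
have E3 : (mu * l2)%:P * g = (g %/ h * l1%:P) * q.
  by rewrite polyCM -mulrA E2 -mulrA E1 muE; ring.
have [H' gE] := irreducible_dvd_polyC_mul q_irr q_gt1 (mulf_neq0 mu0 l20) E3.
by move: gx0; rewrite gE ev2M qx0 mulr0 eqxx.
Qed.

Lemma finite_pairs (A : seq K) (P : K -> K -> Prop) :
  (forall z, z \in A -> exists L : seq K, forall w, P z w -> w \in L) ->
  exists L : seq (K * K), forall z w, z \in A -> P z w -> (z, w) \in L.
Proof.
elim: A => [|z0 A IH] fibP; first by exists [::].
have [L0 L0P] := fibP z0 (mem_head _ _).
have [L LP] := IH (fun z zA => fibP z (@mem_behead _ (z0 :: A) z zA)).
exists ([seq (z0, w) | w <- L0] ++ L) => z w; rewrite in_cons mem_cat.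
by case/orP => [/eqP -> /L0P/(map_f (pair z0)) -> // | zA /(LP _ _ zA) ->]; rewrite orbT.
Qed.

Lemma irreducible_vline q : irreducible_elt q -> (size q <= 1)%N ->
  exists z, forall x, ev2 q x = 0 <-> x.1 = z.
Proof.
move=> [q0 [q_nu q_irr]] q_le1.
have qE := size1_polyC q_le1; set c := q`_0 in qE.
have c0 : c != 0 by apply: contraNneq q0 => c0; rewrite qE c0.
have c_n1 : size c != 1%N.
  apply: contra q_nu => /eqP c1; rewrite qE poly_unitE size_polyC c0 coefC /=.
  by rewrite poly_unitE c1 /= unitfE; have [k k0 ->] := size1_polyC_neq0 c1; rewrite coefC.
have [z [c' [cE _ _]]] := poly_factor_root c0 c_n1.
have qE' : q = c'%:P * ('X - z%:P)%:P by rewrite qE cE polyCM.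
case: (q_irr _ _ qE') => [c'u|]; last by rewrite (negPf (XsubC_polyC_nonunit z)).
exists z => x; have := ev2_unit_neq0 x c'u.
rewrite qE' ev2M !ev2C hornerXsubC => c'x; split.
  by move/eqP; rewrite mulf_eq0 (negPf c'x) subr_eq0 => /eqP.
by move=> ->; rewrite subrr mulr0.
Qed.

Lemma irreducible_meet_finite q g x0 : irreducible_elt q ->
  ev2 q x0 = 0 -> ev2 g x0 != 0 ->
  exists L : seq (K * K), forall x, ev2 q x = 0 -> ev2 g x = 0 -> x \in L.
Proof.
move=> q_irr qx0 gx0; case: (leqP (size q) 1) => [q_le1|q_gt1].
  have [z zP] := irreducible_vline q_irr q_le1.
  have gz0 : peval1 z g != 0.
    by apply: contraNneq gx0 => gz0; rewrite ev2_peval1 (zP x0).1 // gz0 horner0.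
  have [rs rsP] := poly_roots_in_seq gz0.
  exists [seq (z, w) | w <- rs] => x /zP x1 gx; rewrite (surjective_pairing x) x1.
  by apply: map_f; apply: rsP; rewrite -x1 -ev2_peval1.
have [r r0 [u [v ruv]]] := ideal_has_polyC q_irr q_gt1 qx0 gx0.
have [rs rsP] := poly_roots_in_seq r0.
have [L LP] := @finite_pairs rs (fun z w => (peval1 z q).[w] = 0)
  (fun z _ => poly_roots_in_seq (peval1_irreducible_neq0 z q_irr q_gt1)).
exists L => x qx gx; rewrite (surjective_pairing x); apply: LP; last by rewrite -ev2_peval1.
by apply: rsP; rewrite -ev2C ruv ev2D !ev2M qx gx !mulr0 addr0.
Qed.

Lemma irreducible_curve_infinite q (L : seq (K * K)) : irreducible_elt q ->
  exists x, ev2 q x = 0 /\ x \notin L.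
Proof.
move=> q_irr; case: (leqP (size q) 1) => [q_le1|q_gt1].
  have [z zP] := irreducible_vline q_irr q_le1.
  have [t tL] := exists_notin (map snd L).
  by exists (z, t); split; [apply/zP | apply: contra tL => /(map_f snd)].
have lq0 : lead_coef q != 0 by rewrite lead_coef_eq0; case: q_irr.
have [t [qt tL]] := exists_nonroot_notin (map fst L) lq0.
have : size (peval1 t q) != 1%N.
  rewrite /peval1 size_map_poly_id0 ?horner_evalE //.
  by case: (size q) q_gt1 => [|[]].
case/closed_rootP => w /rootP qtw.
by exists (t, w); split; [rewrite ev2_peval1 | apply: contra tL => /(map_f fst)].
Qed.

Lemma ev2_nonzero_notin h (L : seq (K * K)) : h != 0 ->
  exists x, ev2 h x != 0 /\ x \notin L.
Proof.
move=> h0; have lh0 : lead_coef h != 0 by rewrite lead_coef_eq0.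
have [t [ht tL]] := exists_nonroot_notin (map fst L) lh0.
have ht0 : peval1 t h != 0.
  by rewrite -size_poly_eq0 /peval1 size_map_poly_id0 ?horner_evalE // size_poly_eq0.
have [w [htw _]] := exists_nonroot_notin [::] ht0.
by exists (t, w); split; [rewrite ev2_peval1 | apply: contra tL => /(map_f fst)].
Qed.

(* A size measure on [K[X1][X2]] that drops under every nontrivial factorization. *)
Definition bisize p := (size p + size (lead_coef p))%N.

Lemma bisize_nonunit p : p != 0 -> p \isn't a GRing.unit -> (3 <= bisize p)%N.
Proof.
move=> p0 p_nu; rewrite /bisize.
have : (0 < size (lead_coef p))%N by rewrite size_poly_gt0 lead_coef_eq0.
have : (0 < size p)%N by rewrite size_poly_gt0.
case: (eqVneq (size p) 1%N) => [p1|]; last by lia.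
case: (eqVneq (size (lead_coef p)) 1%N) => [l1|]; last by lia.
move: p_nu; rewrite poly_unitE p1 eqxx /=.
have -> : p`_0 = lead_coef p by rewrite lead_coefE p1.
rewrite poly_unitE l1 eqxx /= unitfE.
by have [k k0 ->] := size1_polyC_neq0 l1; rewrite coefC k0.
Qed.

Lemma bisizeM p q : p != 0 -> q != 0 -> (bisize (p * q) + 2 = bisize p + bisize q)%N.
Proof.
move=> p0 q0; rewrite /bisize lead_coefM size_mul // size_mul ?lead_coef_eq0 //.
have : (0 < size (lead_coef p))%N by rewrite size_poly_gt0 lead_coef_eq0.
have : (0 < size (lead_coef q))%N by rewrite size_poly_gt0 lead_coef_eq0.
have : (0 < size p)%N by rewrite size_poly_gt0.
have : (0 < size q)%N by rewrite size_poly_gt0.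
move: (size p) (size q) (size (lead_coef p)) (size (lead_coef q)) => *; lia.
Qed.

Lemma zeros_in_irreducible_factors h : h != 0 -> exists qs : seq {poly {poly K}},
  (forall r, r \in qs -> irreducible_elt r) /\
  forall x, ev2 h x = 0 -> exists2 r, r \in qs & ev2 r x = 0.
Proof.
elim: {h}_.+1 {-2}h (ltnSn (bisize h)) => // n IH h; rewrite ltnS => h_le h0.
case: (boolP (h \is a GRing.unit)) => [hu|h_nu].
  by exists [::]; split=> // x hx; move: (ev2_unit_neq0 x hu); rewrite hx eqxx.
case: (classic (irreducible_elt h)) => [h_irr|h_red].
  exists [:: h]; split=> [r|x hx]; first by rewrite inE => /eqP ->.
  by exists h; rewrite ?mem_head.
have [g [k [hE g_nu k_nu]]] : exists g k,
    [/\ h = g * k, g \isn't a GRing.unit & k \isn't a GRing.unit].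
  apply: NNPP => nofact; apply: h_red; split=> //; split=> // g k hE.
  by apply: NNPP => /not_or_and [/negP g_nu /negP k_nu]; apply: nofact; exists g, k.
have g0 : g != 0 by apply: contraNneq h0 => g0; rewrite hE g0 mul0r.
have k0 : k != 0 by apply: contraNneq h0 => k0; rewrite hE k0 mulr0.
have := bisizeM g0 k0; rewrite -hE => hgk.
have := bisize_nonunit g0 g_nu; have := bisize_nonunit k0 k_nu => k3 g3.
have [qs1 [qs1_irr qs1P]] := IH g ltac:(lia) g0.
have [qs2 [qs2_irr qs2P]] := IH k ltac:(lia) k0.
exists (qs1 ++ qs2); split=> [r|x]; first by rewrite mem_cat => /orP [/qs1_irr|/qs2_irr].
rewrite hE ev2M => /eqP; rewrite mulf_eq0 => /orP [/eqP/qs1P|/eqP/qs2P] [r rqs rx];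
  by exists r; rewrite // mem_cat rqs ?orbT.
Qed.

End ClosedFieldCurves.

Section ZariskiTopology.
Variable K : fieldType.
Implicit Types (S Z W G Y : K * K -> Prop) (p g h r : {poly {poly K}}) (x : K * K).

Lemma closed_ext S Z : zariski_closed S -> (forall x, S x <-> Z x) -> zariski_closed Z.
Proof. by move=> [F FP] SZ; exists F => x; rewrite -SZ. Qed.

Lemma closed_curve p : zariski_closed (curve p).
Proof. by exists (eq^~ p) => x; split=> [px _ -> | ]; last exact. Qed.

Lemma closed0 : zariski_closed (fun _ : K * K => False).
Proof.
exists (eq^~ 1) => x; split=> // /(_ 1 erefl).
by rewrite ev2_1 => /eqP; rewrite oner_eq0.
Qed.

Lemma closed_pt x0 : zariski_closed (fun x => x = x0).
Proof.
exists (fun g => g = ('X - x0.1%:P)%:P \/ g = 'X - x0.2%:P%:P) => x; split.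
  by move=> -> g [->|->]; rewrite ?ev2C ?hornerXsubC ?ev2B ?ev2X ?ev2CC subrr.
move=> x0P; have := x0P _ (or_introl erefl); have := x0P _ (or_intror erefl).
rewrite ev2B ev2X ev2CC ev2C hornerXsubC => /subr0_eq x2 /subr0_eq x1.
by rewrite (surjective_pairing x) (surjective_pairing x0) x1 x2.
Qed.

Lemma closedU S Z : zariski_closed S -> zariski_closed Z ->
  zariski_closed (fun x => S x \/ Z x).
Proof.
move=> [F FP] [G GP].
exists (fun g => exists g1 g2, [/\ F g1, G g2 & g = g1 * g2]) => x; split.
  move=> [/FP Sx|/GP Zx] g [g1 [g2 [Fg1 Gg2 ->]]]; rewrite ev2M.
    by rewrite (Sx g1 Fg1) mul0r.
  by rewrite (Zx g2 Gg2) mulr0.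
move=> x0; apply: NNPP => /not_or_and [/FP nSx /GP nZx].
apply: nSx => g1 Fg1; apply: NNPP => g1x; apply: nZx => g2 Gg2; apply: NNPP => g2x.
have /eqP := x0 (g1 * g2) (ex_intro _ g1 (ex_intro _ g2 (And3 Fg1 Gg2 erefl))).
by rewrite ev2M mulf_eq0 => /orP [] /eqP.
Qed.

Lemma closedI S Z : zariski_closed S -> zariski_closed Z ->
  zariski_closed (fun x => S x /\ Z x).
Proof.
move=> [F FP] [G GP]; exists (fun g => F g \/ G g) => x; rewrite FP GP.
by split=> [[Sx Zx] g [/Sx|/Zx]|x0]; last by split=> g Fg; apply: x0; [left|right].
Qed.

Lemma closed_finite S (L : seq (K * K)) : (forall x, S x -> x \in L) -> zariski_closed S.
Proof.
elim: L S => [|x0 L IH] S SL.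
  by apply: closed_ext closed0 _ => x; split=> // /SL.
have S'_closed : zariski_closed (fun x => S x /\ x <> x0).
  apply: IH => x [/SL]; rewrite in_cons => /orP [/eqP//|//].
case: (classic (S x0)) => Sx0.
  apply: closed_ext (closedU S'_closed (closed_pt x0)) _ => x.
  by split=> [[[]|->]|Sx] //; case: (classic (x = x0)); [right|left].
apply: closed_ext S'_closed _ => x; split=> [[]//|Sx]; split=> // xx0.
by apply: Sx0; rewrite -xx0.
Qed.

Lemma closed_separate Z x : zariski_closed Z -> ~ Z x ->
  exists g, ev2 g x != 0 /\ forall y, Z y -> ev2 g y = 0.
Proof.
move=> [F FP] /FP nZx.
have [g [Fg gx]] : exists g, F g /\ ev2 g x != 0.
  apply: NNPP => nog; apply: nZx => g Fg; apply: NNPP => gx; apply: nog.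
  by exists g; split=> //; apply/eqP.
by exists g; split=> // y /FP; apply.
Qed.

Lemma closed_zclosure S : zariski_closed (zclosure S).
Proof.
exists (fun g => forall y, S y -> ev2 g y = 0) => x; split.
  by move=> Sx g gS; apply: Sx gS; first exact: closed_curve.
by move=> x0 Z [F FP] SZ; apply/FP => g Fg; apply: x0 => y /SZ /FP; apply.
Qed.

Lemma zirreducible_subU G Z1 Z2 : zirreducible G ->
  zariski_closed Z1 -> zariski_closed Z2 -> (forall x, G x -> Z1 x \/ Z2 x) ->
  subset2 G Z1 \/ subset2 G Z2.
Proof.
move=> [G_closed [_ G_irr]] Z1_closed Z2_closed GZ.
have [] := G_irr (fun x => G x /\ Z1 x) (fun x => G x /\ Z2 x)
  (closedI G_closed Z1_closed) (closedI G_closed Z2_closed).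
- by move=> x; split=> [Gx|[[]|[]]//]; case: (GZ x Gx); [left|right].
- by move=> GZ1; left=> x /GZ1 [].
- by move=> GZ2; right=> x /GZ2 [].
Qed.

Lemma zirreducible_finite G (L : seq (K * K)) : zirreducible G ->
  (forall x, G x -> x \in L) -> exists x0, forall x, G x <-> x = x0.
Proof.
move=> G_irr GL; have [G_closed [[x0 Gx0] _]] := G_irr.
exists x0; have [] := zirreducible_subU G_irr (closed_pt x0)
  (closed_finite (S := fun x => x \in L /\ x <> x0) (fun x => @proj1 _ _)).
- move=> x Gx; case: (classic (x = x0)); [left|right] => //.
  by split=> //; apply: GL.
- by move=> Gx0_only x; split=> [/Gx0_only|->].
- by move=> /(_ x0 Gx0) [].
Qed.

Lemma zclosure_min S Z : zariski_closed Z -> (forall x, S x -> Z x) ->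
  forall x, zclosure S x -> Z x.
Proof. by move=> Z_closed SZ x; apply. Qed.

End ZariskiTopology.

Section IrreducibleClosedSets.
Variable K : closedFieldType.
Implicit Types (G : K * K -> Prop) (q : {poly {poly K}}).

Lemma zirreducible_plane : zirreducible (fun _ : K * K => True).
Proof.
split; first by exists (fun _ => False).
split=> [|Z1 Z2 Z1_closed Z2_closed Z12]; first by exists (0, 0).
apply: NNPP => /not_or_and [nZ1 nZ2].
have [x1 /(closed_separate Z1_closed) [g1 [g1x Z1g1]]] : exists x, ~ Z1 x.
  by apply: not_all_ex_not => Z1x; apply: nZ1 => x _.
have [x2 /(closed_separate Z2_closed) [g2 [g2x Z2g2]]] : exists x, ~ Z2 x.
  by apply: not_all_ex_not => Z2x; apply: nZ2 => x _.
have g12 : g1 * g2 != 0 by rewrite mulf_neq0 // (ev2_neq0_poly g1x, ev2_neq0_poly g2x).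
have [x [g12x _]] := ev2_nonzero_notin [::] g12.
by move: g12x; case: ((Z12 x).1 I) => [/Z1g1|/Z2g2] gx; rewrite ev2M gx ?mul0r ?mulr0 eqxx.
Qed.

Lemma zirreducible_curve q : irreducible_elt q -> zirreducible (@curve K q).
Proof.
move=> q_irr; split; first exact: closed_curve.
split=> [|Z1 Z2 Z1_closed Z2_closed Z12].
  by have [x [qx _]] := irreducible_curve_infinite [::] q_irr; exists x.
apply: NNPP => /not_or_and [nZ1 nZ2].
have [x1 [qx1 /(closed_separate Z1_closed) [g1 [g1x Z1g1]]]] : exists x, curve q x /\ ~ Z1 x.
  by apply: NNPP => H; apply: nZ1 => x qx; apply: NNPP => nZ1x; apply: H; exists x.
have [x2 [qx2 /(closed_separate Z2_closed) [g2 [g2x Z2g2]]]] : exists x, curve q x /\ ~ Z2 x.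
  by apply: NNPP => H; apply: nZ2 => x qx; apply: NNPP => nZ2x; apply: H; exists x.
have [L1 L1P] := irreducible_meet_finite q_irr qx1 g1x.
have [L2 L2P] := irreducible_meet_finite q_irr qx2 g2x.
have [x [qx]] := irreducible_curve_infinite (L1 ++ L2) q_irr.
by rewrite mem_cat; case: ((Z12 x).1 qx) => [/Z1g1/(L1P x qx)|/Z2g2/(L2P x qx)] ->; rewrite ?orbT.
Qed.

Section ComponentComplement.
Variables W G : K * K -> Prop.
Hypothesis W_closed : zariski_closed W.
Hypothesis G_comp : irreducible_component W G.

Let G_irr : zirreducible G := G_comp.1.
Let G_ne : exists x, G x := G_irr.2.1.

Lemma component_not_sub_outside (L : seq (K * K)) :
  ~ subset2 G (fun x => x \in L /\ ~ G x).
Proof. by have [x Gx] := G_ne => /(_ x Gx) []. Qed.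

(* A component [G] inside an irreducible curve [r] either is [curve r] or is a point
   among the finitely many points of [W] on [curve r]. *)
Lemma component_meet_curve r : irreducible_elt r -> exists Y, [/\ zariski_closed Y,
  ~ subset2 G Y & forall x, W x -> ev2 r x = 0 -> G x \/ Y x].
Proof.
move=> r_irr; case: (classic (subset2 G (curve r))) => [Gr|nGr]; last first.
  by exists (curve r); split=> // [|x _ rx]; [exact: closed_curve | right].
have [L LP] : exists L : seq (K * K), forall x, W x -> ev2 r x = 0 -> G x \/ x \in L.
  case: (classic (subset2 (curve r) W)) => [rW|nrW].
    have rG := G_comp.2.2 _ (zirreducible_curve r_irr) Gr rW.
    by exists [::] => x _ /rG; left.
  have [x1 [rx1 nWx1]] : exists x, curve r x /\ ~ W x.
    by apply: NNPP => H; apply: nrW => x rx; apply: NNPP => nWx; apply: H; exists x.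
  have [g [gx1 Wg]] := closed_separate W_closed nWx1.
  have [L LP] := irreducible_meet_finite r_irr rx1 gx1.
  by exists L => x Wx rx; right; apply: LP rx (Wg x Wx).
exists (fun x => x \in L /\ ~ G x); split.
- exact: closed_finite (fun x => @proj1 _ _).
- exact: component_not_sub_outside.
- move=> x Wx rx; case: (classic (G x)) => Gx; first by left.
  by case: (LP x Wx rx) => // xL; right.
Qed.

Lemma component_complement : exists Y, [/\ zariski_closed Y,
  ~ subset2 G Y & forall x, W x -> G x \/ Y x].
Proof.
case: (classic (forall x, W x)) => [W_all|/not_all_ex_not [x0 nWx0]].
  have G_all := G_comp.2.2 _ zirreducible_plane (fun _ _ => I) (fun x _ => W_all x).
  exists (fun x => x \in [::] /\ ~ G x); split=> [||x _]; last by left; apply: G_all.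
    exact: closed_finite (fun x => @proj1 _ _).
  exact: component_not_sub_outside.
have [h [hx0 Wh]] := closed_separate W_closed nWx0.
have [qs [qs_irr qsP]] := zeros_in_irreducible_factors (ev2_neq0_poly hx0).
suff [Y [Y_closed nGY WY]] : exists Y, [/\ zariski_closed Y, ~ subset2 G Y &
    forall x, W x -> (exists2 r, r \in qs & ev2 r x = 0) -> G x \/ Y x].
  by exists Y; split=> // x Wx; apply: WY (qsP x (Wh x Wx)).
elim: qs qs_irr {qsP} => [|r qs IH] qs_irr.
  exists (fun x => x \in [::] /\ ~ G x); split=> [||x _ [] //].
    exact: closed_finite (fun x => @proj1 _ _).
  exact: component_not_sub_outside.
have [Yr [Yr_closed nGYr WYr]] := component_meet_curve (qs_irr r (mem_head _ _)).
have [Y [Y_closed nGY WY]] := IH (fun r' r'qs => qs_irr r' (@mem_behead _ (r :: qs) r' r'qs)).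
exists (fun x => Yr x \/ Y x); split; first exact: closedU.
  by case/(zirreducible_subU G_irr Yr_closed Y_closed).
move=> x Wx [r'] /predU1P [-> /(WYr x Wx)|r'qs r'x]; first by case; [left|right; left].
by case: (WY x Wx (ex_intro2 _ _ r' r'qs r'x)); [left|right; right].
Qed.

End ComponentComplement.

End IrreducibleClosedSets.

Lemma parallel_vector_scale (F : fieldType) (Y1 Y2 v1 v2 d : F) :
  Y1 ^+ 2 + Y2 ^+ 2 != 0 -> d != 0 ->
  Y2 * v1 - Y1 * v2 = 0 -> v1 ^+ 2 + v2 ^+ 2 = d ^+ 2 ->
  exists s, [/\ s ^+ 2 = Y1 ^+ 2 + Y2 ^+ 2, v1 = d / s * Y1 & v2 = d / s * Y2].
Proof.
set N := Y1 ^+ 2 + Y2 ^+ 2 => N0 d0 cross vd.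
pose t := (v1 * Y1 + v2 * Y2) / N.
have v1E : v1 = t * Y1.
  apply: (mulIf N0); rewrite /t mulrAC divfK //; apply: subr0_eq.
  by transitivity (Y2 * (Y2 * v1 - Y1 * v2)); [rewrite /N; ring | rewrite cross mulr0].
have v2E : v2 = t * Y2.
  apply: (mulIf N0); rewrite /t mulrAC divfK //; apply: subr0_eq.
  by transitivity (- Y1 * (Y2 * v1 - Y1 * v2)); [rewrite /N; ring | rewrite cross mulr0].
have dE : d ^+ 2 = t ^+ 2 * N by rewrite -vd v1E v2E /N; ring.
have t0 : t != 0 by apply: contra_eq_neq dE => ->; rewrite expr0n mul0r expf_neq0.
have dt : d / (d / t) = t by rewrite invf_div mulrC divfK.
exists (d / t); rewrite dt; split=> //.
by rewrite expr_div_n dE mulrC mulKf // expf_neq0.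
Qed.

Section Conchoid.
Variable K : closedFieldType.
Hypothesis charK0 : [pchar K] =i pred0.
Variable f : {poly {poly K}}.
Hypothesis f_irr : irreducible_elt f.
Variables a b d : K.
Hypothesis d_neq0 : d != 0.
Hypothesis C0_ne : exists p : K * K, curve f p /\ (p.1 - a) ^+ 2 + (p.2 - b) ^+ 2 != 0.
Implicit Types (x y : K * K) (g h : {poly {poly K}}).

Definition distA2 y := (y.1 - a) ^+ 2 + (y.2 - b) ^+ 2.

Definition distA2_poly : {poly {poly K}} := (('X - a%:P) ^+ 2)%:P + ('X - b%:P%:P) ^+ 2.

Lemma ev2_distA2 y : ev2 distA2_poly y = distA2 y.
Proof. by rewrite ev2D ev2C ev2_exp ev2B ev2X ev2CC horner_exp hornerXsubC. Qed.

(* [s] is a square root of [distA2 y]; the two roots give the two points of the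
   conchoid on the line through [A] and [y], at distance [d] from [y]. *)
Definition conch_pt y s := (y.1 + d / s * (y.1 - a), y.2 + d / s * (y.2 - b)).

Lemma sqrt_distA2_neq0 y s : distA2 y != 0 -> s ^+ 2 = distA2 y -> s != 0.
Proof. by move=> y0 sy; apply: contra_eq_neq sy => ->; rewrite expr0n eq_sym. Qed.

Lemma conchBP x y : (exists w, conchB f a b d x y w) <->
  [/\ curve f y, distA2 y != 0 & exists2 s, s ^+ 2 = distA2 y & x = conch_pt y s].
Proof.
split=> [[w [fy [xy_d [cross yw]]]]|[fy y0 [s sy ->]]].
  have y0 : distA2 y != 0.
    by apply: contra_eq_neq yw; rewrite -/(distA2 y) => ->; rewrite mulr0 eq_sym oner_eq0.
  have [s [sy v1E v2E]] := parallel_vector_scale y0 d_neq0 cross xy_d.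
  split=> //; exists s => //.
  by rewrite /conch_pt -v1E -v2E !subrKC -surjective_pairing.
have s0 := sqrt_distA2_neq0 y0 sy.
exists (distA2 y)^-1; split=> //=; split; last split; last by rewrite mulVf.
- transitivity ((d / s) ^+ 2 * distA2 y); first by rewrite /distA2; ring.
  by rewrite -sy; field.
- by ring.
Qed.

(* Regular functions on the open set [distA2 != 0]: a polynomial over a power of [distA2]. *)
Definition regular (phi : K * K -> K) := exists (Phi : {poly {poly K}}) (k : nat),
  forall y, distA2 y != 0 -> distA2 y ^+ k * phi y = ev2 Phi y.

Lemma regular_cst c : regular (fun _ => c).
Proof. by exists c%:P%:P, 0%N => y _; rewrite ev2CC mul1r. Qed.

Lemma regularD u v : regular u -> regular v -> regular (fun y => u y + v y).
Proof.
move=> [P1 [k1 uP]] [P2 [k2 vP]].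
exists (distA2_poly ^+ k2 * P1 + distA2_poly ^+ k1 * P2), (k1 + k2)%N => y y0.
by rewrite ev2D !ev2M !ev2_exp ev2_distA2 -uP // -vP // exprD; ring.
Qed.

Lemma regularM u v : regular u -> regular v -> regular (fun y => u y * v y).
Proof.
move=> [P1 [k1 uP]] [P2 [k2 vP]]; exists (P1 * P2), (k1 + k2)%N => y y0.
by rewrite ev2M -uP // -vP // exprD; ring.
Qed.

Lemma regular_fst : regular fst.
Proof. by exists 'X%:P, 0%N => y _; rewrite ev2XC mul1r. Qed.

Lemma regular_snd : regular snd.
Proof. by exists 'X, 0%N => y _; rewrite ev2X mul1r. Qed.

Lemma regular_distA2 : regular distA2.
Proof. by exists distA2_poly, 0%N => y _; rewrite ev2_distA2 mul1r. Qed.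

Lemma regular_distA2_inv : regular (fun y => (distA2 y)^-1).
Proof. by exists 1, 1%N => y y0; rewrite ev2_1 expr1 mulfV. Qed.

(* Regular functions on the double cover [s ^+ 2 = distA2 y] of the curve. *)
Definition cover_regular (psi : (K * K) * K -> K) := exists phi0 phi1,
  [/\ regular phi0, regular phi1 &
    forall y s, distA2 y != 0 -> s ^+ 2 = distA2 y -> psi (y, s) = phi0 y + s * phi1 y].

Lemma cover_regular_ext u v : cover_regular u -> (forall t, u t = v t) -> cover_regular v.
Proof.
move=> [p0 [p1 [r0 r1 uP]]] uv.
by exists p0, p1; split=> // y s y0 sy; rewrite -uv uP.
Qed.

Lemma cover_regular_cst c : cover_regular (fun _ => c).
Proof.
exists (fun _ => c), (fun _ => 0); split; try exact: regular_cst.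
by move=> *; rewrite mulr0 addr0.
Qed.

Lemma cover_regularD u v : cover_regular u -> cover_regular v ->
  cover_regular (fun t => u t + v t).
Proof.
move=> [p0 [p1 [rp0 rp1 uP]]] [q0 [q1 [rq0 rq1 vP]]].
exists (fun y => p0 y + q0 y), (fun y => p1 y + q1 y); split; try exact: regularD.
by move=> y s y0 sy; rewrite uP // vP //; ring.
Qed.

Lemma cover_regularM u v : cover_regular u -> cover_regular v ->
  cover_regular (fun t => u t * v t).
Proof.
move=> [p0 [p1 [rp0 rp1 uP]]] [q0 [q1 [rq0 rq1 vP]]].
exists (fun y => p0 y * q0 y + distA2 y * (p1 y * q1 y)),
  (fun y => p0 y * q1 y + p1 y * q0 y); split.
- by apply: regularD; apply: regularM => //; [exact: regular_distA2 | exact: regularM].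
- by apply: regularD; apply: regularM.
- by move=> y s y0 sy; rewrite uP // vP // -sy; ring.
Qed.

Lemma cover_regular_shift (u : K * K -> K) (c : K) : regular u ->
  cover_regular (fun t => u t.1 + d / t.2 * (u t.1 - c)).
Proof.
move=> ru; exists u, (fun y => d * (u y - c) * (distA2 y)^-1); split=> //.
  apply: regularM regular_distA2_inv; apply: regularM (regular_cst d) _.
  exact: regularD ru (regular_cst (- c)).
move=> y s y0 sy /=; have s0 := sqrt_distA2_neq0 y0 sy.
by rewrite -sy; field.
Qed.

Lemma cover_regular_ev2_conch_pt g : cover_regular (fun t => ev2 g (conch_pt t.1 t.2)).
Proof.
exact: ev2_closed_class cover_regular_ext cover_regular_cst cover_regularD cover_regularM g _ _
  (cover_regular_shift a regular_fst) (cover_regular_shift b regular_snd).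
Qed.

Lemma two_neq0 : (2 : K) != 0.
Proof. by have := (pcharf0P K).1 charK0 2; rewrite /= => ->. Qed.

Lemma curve_isotropic_finite : exists L : seq (K * K),
  forall y, curve f y -> distA2 y = 0 -> y \in L.
Proof.
have [p [fp p0]] := C0_ne.
have pA : ev2 distA2_poly p != 0 by rewrite ev2_distA2.
have [L LP] := irreducible_meet_finite f_irr fp pA.
by exists L => y fy y0; apply: LP fy _; rewrite ev2_distA2.
Qed.

(* Otherwise the numerator of [phi] would meet the irreducible curve in finitely many points. *)
Lemma regular_vanish_curve phi (E : seq (K * K)) : regular phi ->
  (forall y, curve f y -> distA2 y != 0 -> y \notin E -> phi y = 0) ->
  forall y, curve f y -> distA2 y != 0 -> phi y = 0.
Proof.
move=> [P [k phiP]] phiE z fz z0; apply: NNPP => /eqP phiz.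
have Pz : ev2 P z != 0 by rewrite -phiP // mulf_neq0 ?expf_neq0.
have [L1 L1P] := irreducible_meet_finite f_irr fz Pz.
have [L2 L2P] := curve_isotropic_finite.
have [y [fy]] := irreducible_curve_infinite (L1 ++ L2 ++ E) f_irr.
rewrite !mem_cat !negb_or => /and3P [yL1 yL2 yE].
have y0 : distA2 y != 0 by apply: contraNneq yL2 => /(L2P y fy).
by move: yL1; rewrite (L1P y fy) // -phiP // phiE // mulr0.
Qed.

(* Over each point of the curve lie both [s] and [-s]; as the characteristic is not 2,
   [psi] vanishing at both forces both components [phi0], [phi1] to vanish. *)
Lemma cover_regular_vanish psi (E : seq (K * K)) : cover_regular psi ->
  (forall y s, curve f y -> s ^+ 2 = distA2 y -> distA2 y != 0 -> y \notin E ->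
     psi (y, s) = 0) ->
  forall y s, curve f y -> s ^+ 2 = distA2 y -> distA2 y != 0 -> psi (y, s) = 0.
Proof.
move=> [phi0 [phi1 [r0 r1 psiE]]] psi0.
have phi01 : forall y, curve f y -> distA2 y != 0 -> y \notin E -> phi0 y = 0 /\ phi1 y = 0.
  move=> y fy y0 yE; have [s sy] := exists_sqrt (distA2 y).
  have s0 := sqrt_distA2_neq0 y0 sy.
  have := psi0 y s fy sy y0 yE; have := psi0 y (- s) fy (etrans (sqrrN s) sy) y0 yE.
  rewrite !psiE ?sqrrN // => minus plus.
  have /eqP : 2 * phi0 y = 0 by rewrite -[RHS](addr0 0) -{1}minus -plus; ring.
  rewrite mulf_eq0 (negPf two_neq0) /= => /eqP phi00; split=> //.
  by move/eqP: plus; rewrite phi00 add0r mulf_eq0 (negPf s0) => /eqP.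
have phi0_0 := regular_vanish_curve r0 (fun z fz z0 zE => (phi01 z fz z0 zE).1).
have phi1_0 := regular_vanish_curve r1 (fun z fz z0 zE => (phi01 z fz z0 zE).2).
by move=> y s fy sy y0; rewrite psiE // phi0_0 // phi1_0 // mulr0 addr0.
Qed.

Lemma pi1_pi2inv_conch_pt (O : K * K -> Prop) y s :
  curve f y -> distA2 y != 0 -> s ^+ 2 = distA2 y -> O y ->
  pi1_pi2inv f a b d O (conch_pt y s).
Proof.
move=> fy y0 sy Oy.
have [w Bw] := (conchBP (conch_pt y s) y).2 (And3 fy y0 (ex_intro2 _ _ s sy erefl)).
by exists y, w.
Qed.

(* Every polynomial vanishing on the image of the open set [O] vanishes, after composition
   with [conch_pt], on the cover above [O], hence on the whole cover. *)
Lemma pi1_pi2inv_dense (O : K * K -> Prop) : open_in (curve f) O -> (exists p, O p) ->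
  nonempty_dense_subset (pi1_pi2inv f a b d O) (conchoid f a b d).
Proof.
move=> [Z [Z_closed OP]] [p Op]; have [fp nZp] := (OP p).1 Op.
have [g [gp Zg]] := closed_separate Z_closed nZp.
have [L1 L1P] := irreducible_meet_finite f_irr fp gp.
have O_cofinite y : curve f y -> y \notin L1 -> O y.
  by move=> fy yL1; apply/OP; split=> // /Zg /(L1P y fy); apply/negP.
split; [|split].
- have [L2 L2P] := curve_isotropic_finite.
  have [y [fy]] := irreducible_curve_infinite (L1 ++ L2) f_irr.
  rewrite mem_cat negb_or => /andP [yL1 yL2].
  have y0 : distA2 y != 0 by apply: contraNneq yL2 => /(L2P y fy).
  have [s sy] := exists_sqrt (distA2 y).
  by exists (conch_pt y s); apply: pi1_pi2inv_conch_pt => //; apply: O_cofinite.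
- by move=> x [y [w [Bw _]]] Z' _; apply; exists y, w.
- move=> x Wx Z' [F FP] OZ'; apply: Wx => [|x' [y [w [Bw _]]]]; first by exists F.
  have [fy y0 [s sy ->]] := (conchBP _ y).1 (ex_intro _ w Bw).
  apply/FP => h Fh; apply: (cover_regular_vanish (cover_regular_ev2_conch_pt h) _ fy sy y0).
  move=> y' s' fy' sy' y'0 y'L1.
  by have /FP := OZ' _ (pi1_pi2inv_conch_pt fy' y'0 sy' (O_cofinite y' fy' y'L1)); apply.
Qed.

Definition laurent (phi : K -> K) := exists (Phi : {poly K}) (k : nat),
  forall t, t != 0 -> t ^+ k * phi t = Phi.[t].

Lemma laurent_ext u v : laurent u -> (forall t, u t = v t) -> laurent v.
Proof. by move=> [P [k uP]] uv; exists P, k => t /uP; rewrite uv. Qed.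

Lemma laurent_cst c : laurent (fun _ => c).
Proof. by exists c%:P, 0%N => t _; rewrite hornerC mul1r. Qed.

Lemma laurentD u v : laurent u -> laurent v -> laurent (fun t => u t + v t).
Proof.
move=> [P1 [k1 uP]] [P2 [k2 vP]]; exists ('X ^+ k2 * P1 + 'X ^+ k1 * P2), (k1 + k2)%N.
by move=> t t0; rewrite hornerD !hornerM !hornerXn -uP // -vP // exprD; ring.
Qed.

Lemma laurentM u v : laurent u -> laurent v -> laurent (fun t => u t * v t).
Proof.
move=> [P1 [k1 uP]] [P2 [k2 vP]]; exists (P1 * P2), (k1 + k2)%N => t t0.
by rewrite hornerM -uP // -vP // exprD; ring.
Qed.

Lemma laurent_id : laurent id.
Proof. by exists 'X, 0%N => t _; rewrite hornerX mul1r. Qed.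

Lemma laurent_inv : laurent GRing.inv.
Proof. by exists 1, 1%N => t t0; rewrite hornerC expr1 mulfV. Qed.

Lemma laurent_shift (c e k : K) : laurent (fun t => c + (t + k / t) * e).
Proof.
apply: laurentD (laurent_cst c) (laurentM (laurentD laurent_id _) (laurent_cst e)).
exact: laurentM (laurent_cst k) laurent_inv.
Qed.

Section CircleParametrization.
Variable i : K.
Hypothesis i2 : i ^+ 2 = -1.

Definition circle_pt (t : K) :=
  (a + (t + d ^+ 2 / t) / 2, b + (t + (- d ^+ 2) / t) / (2 * i)).

(* On the circle [u ^+ 2 + v ^+ 2 = d ^+ 2] factors as [(u + i v) (u - i v) = d ^+ 2]. *)
Lemma circle_ptK y : distA2 y = d ^+ 2 ->
  let t := (y.1 - a) + i * (y.2 - b) in t != 0 /\ circle_pt t = y.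
Proof.
move=> yd t.
have i0 : i != 0 by apply: contra_eq_neq i2 => ->; rewrite expr0n eq_sym oppr_eq0 oner_eq0.
have tt' : t * ((y.1 - a) - i * (y.2 - b)) = d ^+ 2.
  rewrite -yd /t /distA2; apply: subr0_eq.
  by transitivity (- (i ^+ 2 + 1) * (y.2 - b) ^+ 2); [ring | rewrite i2 addNr oppr0 mul0r].
have t0 : t != 0 by apply: contra_eq_neq tt' => ->; rewrite mul0r eq_sym expf_neq0.
split=> //; have dt : d ^+ 2 / t = (y.1 - a) - i * (y.2 - b) by rewrite -tt' mulrC mulKf.
rewrite /circle_pt mulNr dt (surjective_pairing y) /t /=.
by congr (_, _); field; rewrite ?i0 two_neq0.
Qed.

End CircleParametrization.

Lemma curve_meet_circle_finite : (exists p, ~ (curve f p <-> circle a b d p)) ->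
  exists E : seq (K * K), forall y, curve f y -> distA2 y = d ^+ 2 -> y \in E.
Proof.
move=> [p fp_circle].
case: (classic (curve f p)) => [fp|nfp].
  have pc : ev2 (distA2_poly - (d ^+ 2)%:P%:P) p != 0.
    by rewrite ev2B ev2_distA2 ev2CC subr_eq0; apply/eqP => cp; apply: fp_circle.
  have [L LP] := irreducible_meet_finite f_irr fp pc.
  by exists L => y fy yd; apply: LP fy _; rewrite ev2B ev2_distA2 ev2CC yd subrr.
have cp : circle a b d p by apply: NNPP => ncp; apply: fp_circle.
have [i i2] := exists_sqrt (-1 : K).
have [Phi [k PhiP]] : laurent (fun t => ev2 f (circle_pt i t)).
  apply: laurent_ext (ev2_closed_class laurent_ext laurent_cst laurentD laurentM f
    (laurent_shift a (2^-1) (d ^+ 2)) (laurent_shift b ((2 * i)^-1) (- d ^+ 2))) _ => t.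
  by [].
have [tp0 tpK] := circle_ptK i2 cp.
have Phi0 : Phi != 0.
  apply/eqP => Phi0; apply: nfp; move/eqP: (PhiP _ tp0).
  by rewrite Phi0 horner0 tpK mulf_eq0 expf_eq0 (negPf tp0) andbF => /eqP.
have [rs rsP] := poly_roots_in_seq Phi0.
exists (map (circle_pt i) rs) => y fy yd; have [ty tyK] := circle_ptK i2 yd.
by rewrite -tyK map_f // rsP // -PhiP // tyK fy mulr0.
Qed.

Lemma conch_pt_sub y s : s != 0 ->
  (conch_pt y s).1 - a = (y.1 - a) * (1 + d / s) /\
  (conch_pt y s).2 - b = (y.2 - b) * (1 + d / s).
Proof. by move=> s0; split; rewrite /conch_pt /=; ring. Qed.

Lemma conch_pt_eq_center y s : distA2 y != 0 -> s ^+ 2 = distA2 y ->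
  conch_pt y s = (a, b) -> distA2 y = d ^+ 2.
Proof.
move=> y0 sy yA; have s0 := sqrt_distA2_neq0 y0 sy.
have [] := conch_pt_sub y s0; rewrite yA /= !subrr.
case: (eqVneq (1 + d / s) 0) => [u0 _ _|u0 /esym/eqP + /esym/eqP].
  suff -> : d = - s by rewrite sqrrN.
  by rewrite -(divfK s0 d) -mulN1r; congr (_ * _); apply/eqP; rewrite -addr_eq0 addrC u0.
rewrite !mulf_eq0 (negPf u0) !orbF !subr_eq0 => /eqP y1 /eqP y2.
by move: y0; rewrite /distA2 y1 y2 !subrr expr0n addr0 eqxx.
Qed.

(* Away from [A], [y] is recovered from [x = conch_pt y s] and [tau := s + d], which
   satisfies [tau ^+ 2 = distA2 x]: there are two choices. *)
Lemma conch_pt_fiber_finite : (exists p, ~ (curve f p <-> circle a b d p)) ->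
  forall x, exists E : seq (K * K), forall y s, curve f y -> distA2 y != 0 ->
    s ^+ 2 = distA2 y -> conch_pt y s = x -> y \in E.
Proof.
move=> not_circle x; have [Ec EcP] := curve_meet_circle_finite not_circle.
case: (eqVneq x (a, b)) => [->|xA].
  by exists Ec => y s fy y0 sy /(conch_pt_eq_center y0 sy); apply: EcP.
have [sig sigx] := exists_sqrt (distA2 x).
pose y_of (tau : K) := (a + (x.1 - a) * ((tau - d) / tau), b + (x.2 - b) * ((tau - d) / tau)).
exists [:: y_of sig; y_of (- sig)] => y s fy y0 sy yx.
have s0 := sqrt_distA2_neq0 y0 sy; set u := 1 + d / s.
have [x1 x2] := conch_pt_sub y s0; rewrite yx -/u in x1 x2.
have u0 : u != 0.
  apply: contraNneq xA => u0; rewrite (surjective_pairing x); apply/eqP.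
  by congr (_, _); apply: subr0_eq; rewrite ?x1 ?x2 u0 mulr0.
have tau_u : s + d = s * u by rewrite /u; field.
have yE : y = y_of (s + d).
  rewrite [LHS]surjective_pairing /y_of addrK x1 x2 tau_u.
  by congr (_, _); field; rewrite u0 s0.
have : (s + d) ^+ 2 = sig ^+ 2 by rewrite sigx tau_u exprMn sy /distA2 x1 x2; ring.
by move/eqP; rewrite eqf_sqr yE => /orP [] /eqP ->; rewrite !inE eqxx ?orbT.
Qed.

Definition conch_image := pi1_pi2inv f a b d (fun _ => True).

Lemma conch_imageP x : conch_image x <->
  exists y s, [/\ curve f y, distA2 y != 0, s ^+ 2 = distA2 y & x = conch_pt y s].
Proof.
split=> [[y [w [Bw _]]]|[y [s [fy y0 sy ->]]]]; last exact: pi1_pi2inv_conch_pt.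
by have [fy y0 [s sy ->]] := (conchBP _ y).1 (ex_intro _ w Bw); exists y, s.
Qed.

Lemma conch_pt_image_finite (L : seq (K * K)) : exists L' : seq (K * K),
  forall y s, y \in L -> s ^+ 2 = distA2 y -> conch_pt y s \in L'.
Proof.
elim: L => [|y0 L [L' L'P]]; first by exists [::].
have [sig sigy] := exists_sqrt (distA2 y0).
exists [:: conch_pt y0 sig, conch_pt y0 (- sig) & L'] => y s /predU1P [->|yL] sy.
  by move: sy; rewrite -sigy => /eqP; rewrite eqf_sqr => /orP [] /eqP ->; rewrite !inE eqxx ?orbT.
by rewrite !inE L'P ?orbT.
Qed.

(* A polynomial vanishing on the image of [O] vanishes at infinitely many points of
   the irreducible curve, hence on all of it. *)
Lemma pi2_pi1inv_dense (O : K * K -> Prop) :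
  (forall L : seq (K * K), exists x, [/\ O x, conch_image x & x \notin L]) ->
  nonempty_dense_subset (pi2_pi1inv f a b d O) (curve f).
Proof.
move=> O_inf; split; [|split].
- by have [x [Ox [y [w [Bw _]]] _]] := O_inf [::]; exists y, x, w.
- by move=> y [x [w [[fy _] _]]].
move=> y fy Z' [F FP] OZ'; apply/FP => g Fg; apply: NNPP => /eqP gy.
have [L LP] := irreducible_meet_finite f_irr fy gy.
have [L' L'P] := conch_pt_image_finite L.
have [x [Ox /conch_imageP [y' [s [fy' y'0 sy' xE]]] xL']] := O_inf L'.
have [w Bw] := (conchBP x y').2 (And3 fy' y'0 (ex_intro2 _ _ s sy' xE)).
have /FP gy' := OZ' y' (ex_intro _ x (ex_intro _ w (conj Bw Ox))).
by move: xL'; rewrite xE L'P // LP // gy'.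
Qed.

Lemma conch_image_sub x : conch_image x -> conchoid f a b d x.
Proof. by move=> imx Z _; apply. Qed.

Lemma component_meets_image G O : irreducible_component (conchoid f a b d) G ->
  open_in G O -> (exists p, O p) ->
  (forall L : seq (K * K), exists x, G x /\ x \notin L) ->
  forall L : seq (K * K), exists x, [/\ O x, conch_image x & x \notin L].
Proof.
move=> G_comp [Z [Z_closed OP]] [p Op] G_inf.
have [Y [Y_closed nGY WGY]] := component_complement (closed_zclosure _) G_comp.
apply: NNPP => /not_all_ex_not [L noL].
have image_sub x : conch_image x -> Y x \/ Z x \/ x \in L.
  move=> imx; case: (WGY x (conch_image_sub imx)) => [Gx|]; last by left.
  case: (classic (Z x)) => Zx; [by right; left | right; right].
  by apply: NNPP => /negP xL; apply: noL; exists x; split=> //; apply/OP.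
have ZL_closed : zariski_closed (fun x => Z x \/ x \in L).
  exact: closedU Z_closed (closed_finite (fun x => id)).
have G_sub x : G x -> Y x \/ (Z x \/ x \in L).
  move=> Gx; apply: (zclosure_min (closedU Y_closed ZL_closed) image_sub).
  exact: G_comp.2.1.
case: (zirreducible_subU G_comp.1 Y_closed ZL_closed G_sub) => // GZL.
have [] := zirreducible_subU G_comp.1 Z_closed (closed_finite (fun x => id)) GZL.
  by move=> /(_ p ((OP p).1 Op).1); have := ((OP p).1 Op).2.
by have [x [Gx /negP xL]] := G_inf L => /(_ x Gx).
Qed.

(* A point component [pt] would have a polynomial [e] vanishing on the image off [pt]
   but not at [pt]; since the fibre of [conch_pt] over [pt] is finite, [e] vanishes on
   the image of a cofinite part of the cover, hence at [pt] too. *)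
Lemma no_point_component G pt : (exists p, ~ (curve f p <-> circle a b d p)) ->
  irreducible_component (conchoid f a b d) G -> ~ (forall x, G x <-> x = pt).
Proof.
move=> not_circle G_comp Gpt.
have [Y [Y_closed nGY WGY]] := component_complement (closed_zclosure _) G_comp.
have nYpt : ~ Y pt by move=> Ypt; apply: nGY => x /Gpt ->.
have [e [ept Ye]] := closed_separate Y_closed nYpt.
have e_image x : conch_image x -> x <> pt -> ev2 e x = 0.
  by move=> /conch_image_sub /WGY [/Gpt //|/Ye].
have [z [t [fz z0 tz ptE]]] : exists y s,
    [/\ curve f y, distA2 y != 0, s ^+ 2 = distA2 y & pt = conch_pt y s].
  apply/conch_imageP; apply: NNPP => nimpt; apply: nYpt.
  apply: (zclosure_min Y_closed) => [x imx|]; last exact: G_comp.2.1 _ ((Gpt pt).2 erefl).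
  by case: (WGY x (conch_image_sub imx)) => // /Gpt xpt; case: nimpt; rewrite -xpt.
have [E EP] := conch_pt_fiber_finite not_circle pt.
suff vanish : forall y s, curve f y -> s ^+ 2 = distA2 y -> distA2 y != 0 ->
    y \notin E -> ev2 e (conch_pt y s) = 0.
  have /= := cover_regular_vanish (cover_regular_ev2_conch_pt e) vanish fz tz z0.
  by rewrite -ptE => ept0; rewrite ept0 eqxx in ept.
move=> y s fy sy y0 yE; apply: e_image; first by apply/conch_imageP; exists y, s.
by move=> /(EP y s fy y0 sy); apply/negP.
Qed.

Lemma pi2_pi1inv_component_dense G O : (exists p, ~ (curve f p <-> circle a b d p)) ->
  irreducible_component (conchoid f a b d) G -> open_in G O -> (exists p, O p) ->
  nonempty_dense_subset (pi2_pi1inv f a b d O) (curve f).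
Proof.
move=> not_circle G_comp O_open O_ne.
apply/pi2_pi1inv_dense/(component_meets_image G_comp O_open O_ne) => L.
apply: NNPP => /not_ex_all_not G_fin.
have [pt Gpt] : exists pt, forall x, G x <-> x = pt.
  apply: (zirreducible_finite G_comp.1 (L := L)) => x Gx.
  by apply: NNPP => /negP xL; apply: (G_fin x).
exact: no_point_component not_circle G_comp Gpt.
Qed.

End Conchoid.

Theorem lemma3 (K : closedFieldType) (charK0 : [pchar K] =i pred0)
  (f : {poly {poly K}}) (f_irr : irreducible_elt f) (a b d : K) (d_neq0 : d != 0)
  (C0_ne : exists p : K * K, curve f p /\ (p.1 - a) ^+ 2 + (p.2 - b) ^+ 2 != 0) :
  (forall O : K * K -> Prop, open_in (curve f) O -> (exists p, O p) ->
     nonempty_dense_subset (pi1_pi2inv f a b d O) (conchoid f a b d)) /\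
  ((exists p, ~ (curve f p <-> circle a b d p)) ->
   forall G O : K * K -> Prop, irreducible_component (conchoid f a b d) G ->
     open_in G O -> (exists p, O p) ->
     nonempty_dense_subset (pi2_pi1inv f a b d O) (curve f)).
Proof.
split=> [O|not_circle G O]; first exact: pi1_pi2inv_dense.
exact: pi2_pi1inv_component_dense.
Qed.
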